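(* Let $F\in Sh^{s,0}_{\Lambda_L}(X)\cap Mod(X)$ be reduced and let $f=(f_1,\dots,f_r)$ and $g=(g_1,\dots,g_r)$ be two local trivializations for $F$. Then $\epsilon_{(F,f)}$ and $\epsilon_{(F,g)}$ are equivalent under the dilation action, i.e. they define the same element of $\mathcal{A}ug$.
   Context: $X=\mathbb{R}^3$ or $S^3$, $k$ a field, $(L,L')$ an $r$-component framed oriented link, $L=K_1\sqcup\dots\sqcup K_r$. Sheaves in $Sh^{s,0}_{\Lambda_L}(X)\cap Mod(X)$ (sheaves of $k$-vector spaces with micro-support at infinity in the unit conormal of $L$, microlocally simple with Morse cone in degree $0$) are equivalent to data $(V,\rho,W_s,\rho_s,T_s)$: $\rho:\pi_1(X\setminus L)\to GL(V)$ the local system on the complement, $W_s$ the stalk on $K_s$, $T_s:W_s\to V$ the injective restriction map with one-dimensional cokernel, the meridian of $K_s$ acting trivially on its image and the longitude action $\rho(\ell_s)$ intertwining with the monodromy of $K_s$; we view $W_s\subset V$. $F$ is reduced if it admits no nonzero locally constant subsheaf, no nonzero locally constant quotient, and no direct summand $F'$ that is the kernel of a surjection from a nonzero locally constant sheaf onto $i'_*k_{L''}$ for a sublink $L''$. $A_c$ denotes trivialized parallel transport along a path $c$, $M_t=\rho(m_t)$. A local trivialization is an $r$-tuple of surjective linear maps $f_s:V\to k$ with $f_s|_{W_s}=0$. $\epsilon_{(F,f)}:\mathrm{Cord}(L)\to k$ is the augmentation of the framed cord algebra given on generators by $\epsilon(c_{st})=f_sA_{c_{st}}(\mathrm{id}_V-M_t)f_t^{-1}$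 for framed cords $c_{st}$ from the framing curve of $K_s$ to that of $K_t$, $\epsilon(\lambda_s)=f_sA_{\ell_s}f_s^{-1}$, $\epsilon(\mu_s)=1-f_s(\mathrm{id}_V-M_s)f_s^{-1}$, where $f_s^{-1}$ is any right inverse of $f_s$ (the result is independent of this choice). Dilation: $d\in(k^* )^r$ sends $\epsilon$ to $\epsilon'$ with $\epsilon'(\lambda_s)=\epsilon(\lambda_s)$, $\epsilon'(\mu_s)=\epsilon(\mu_s)$, $\epsilon'(c_{st})=\frac{d_s}{d_t}\epsilon(c_{st})$; $\mathcal{A}ug$ is the set of augmentations modulo this action. *)

From HB Require Import structures.
From mathcomp Require Import all_boot all_order all_algebra.
Set Implicit Arguments. Unset Strict Implicit. Unset Printing Implicit Defensive.
Import GRing.Theory.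
Local Open Scope ring_scope.

(* Algebraic data (V, rho, W_s, rho_s, T_s) describing a sheaf F in
   Sh^{s,0}_{Lambda_L}(X) \cap Mod(X), for an r-component framed link.
   - V : the stalk of the local system on X \ L (an arbitrary k-vector space);
   - W s : the stalk on K_s, viewed as a subspace of V (via the injective T_s);
   - M s = rho(m_s) : meridian monodromy;  Lam s = rho(l_s) = A_{l_s} :
     trivialized longitude monodromy;
   - cord s t : the framed cords from the framing curve of K_s to that of K_t,
     and A c : trivialized parallel transport along c. *)

Definition subspace (k : fieldType) (V : lmodType k) (W : {pred V}) : Prop :=
  0 \in W /\ forall (a : k) (u v : V), u \in W -> v \in W -> a *: u + v \in W.

Definition codim_one (k : fieldType) (V : lmodType k) (W : {pred V}) : Prop :=
  exists v : V, v \notin W /\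
    forall x : V, exists (a : k) (w : V), w \in W /\ x = a *: v + w.

Definition sheaf_data (k : fieldType) (V : lmodType k) (r : nat)
  (cord : 'I_r -> 'I_r -> Type)
  (W : 'I_r -> {pred V}) (M Lam : 'I_r -> {linear V -> V})
  (A : forall s t : 'I_r, cord s t -> {linear V -> V}) : Prop :=
  [/\ forall s, subspace (W s),
      forall s, codim_one (W s),
      forall s w, w \in W s -> M s w = w,
      (* the longitude action intertwines with the monodromy of K_s,
         in particular it preserves the image of T_s *)
      forall s w, w \in W s -> Lam s w \in W s
    &
      [/\ forall s, bijective (M s), forall s, bijective (Lam s)
         & forall s t (c : cord s t), bijective (A s t c)]].

Definition local_triv (k : fieldType) (V : lmodType k) (r : nat)
  (W : 'I_r -> {pred V}) (f : 'I_r -> {scalar V}) : Prop :=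
  forall s, (forall x : k, exists v : V, f s v = x) /\
            (forall w, w \in W s -> f s w = 0).

(* A right inverse of f_s : V -> k is the linear map x |-> x *: v with
   f_s v = 1; it is encoded by the vector v = finv s. *)
Definition right_inv (k : fieldType) (V : lmodType k) (r : nat)
  (f : 'I_r -> {scalar V}) (finv : 'I_r -> V) : Prop :=
  forall s, f s (finv s) = 1.

Definition eps_cord (k : fieldType) (V : lmodType k) (r : nat)
  (cord : 'I_r -> 'I_r -> Type) (M : 'I_r -> {linear V -> V})
  (A : forall s t : 'I_r, cord s t -> {linear V -> V})
  (f : 'I_r -> {scalar V}) (finv : 'I_r -> V) (s t : 'I_r) (c : cord s t) : k :=
  f s (A s t c (finv t - M t (finv t))).

Definition eps_lambda (k : fieldType) (V : lmodType k) (r : nat)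
  (Lam : 'I_r -> {linear V -> V})
  (f : 'I_r -> {scalar V}) (finv : 'I_r -> V) (s : 'I_r) : k :=
  f s (Lam s (finv s)).

Definition eps_mu (k : fieldType) (V : lmodType k) (r : nat)
  (M : 'I_r -> {linear V -> V})
  (f : 'I_r -> {scalar V}) (finv : 'I_r -> V) (s : 'I_r) : k :=
  1 - f s (finv s - M s (finv s)).

Definition dilation_equiv (k : fieldType) (r : nat)
  (cord : 'I_r -> 'I_r -> Type)
  (e1c e2c : forall s t : 'I_r, cord s t -> k)
  (e1l e2l e1m e2m : 'I_r -> k) : Prop :=
  exists d : 'I_r -> k,
    [/\ forall s, d s != 0,
        forall s, e2l s = e1l s,
        forall s, e2m s = e1m s
      & forall s t (c : cord s t), e2c s t c = d s / d t * e1c s t c].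

From HB Require Import structures.
From mathcomp Require Import all_boot all_order all_algebra.
Set Implicit Arguments. Unset Strict Implicit. Unset Printing Implicit Defensive.
Import GRing.Theory.
Local Open Scope ring_scope.

(* W_s is a hyperplane of V, so every linear form vanishing on W_s is a
   multiple of f_s; in particular g_s = c_s f_s with c_s = g_s(f_s^{-1}(1)),
   and any two right inverses agree modulo W_s up to the factor c_s.  Each
   generator value of the augmentation is a linear form vanishing on W_t
   (because the meridian fixes W_t and the longitude preserves W_s) evaluated
   at the right inverse, so passing from f to g leaves epsilon(lambda_s) and
   epsilon(mu_s) unchanged and multiplies epsilon(c_st) by c_s / c_t. *)

Section Hyperplane.
Variables (k : fieldType) (V : lmodType k) (W : {pred V}).
Hypothesis W_codim1 : codim_one W.
Variables (f : {scalar V}) (u : V).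
Hypotheses (f_W : forall w, w \in W -> f w = 0) (fu1 : f u = 1).

Lemma ker_sub_hyperplane x : f x = 0 -> x \in W.
Proof.
have [v0 [_ decV]] := W_codim1.
have fv0_neq0 : f v0 != 0.
  have [b [w [wW u_dec]]] := decV u.
  apply/eqP => fv0; move: fu1; rewrite u_dec linearP /= fv0 (f_W wW) mulr0 addr0.
  by move/eqP; rewrite eq_sym oner_eq0.
have [a [w [wW ->]]] := decV x.
rewrite linearP /= (f_W wW) addr0 => /eqP.
by rewrite mulf_eq0 (negPf fv0_neq0) orbF => /eqP ->; rewrite scale0r add0r.
Qed.

Lemma scalar_factor_hyperplane (phi : {scalar V}) :
  (forall w, w \in W -> phi w = 0) -> forall x, phi x = f x * phi u.
Proof.
move=> phi_W x; have /phi_W : x - f x *: u \in W.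
  by apply: ker_sub_hyperplane; rewrite linearB linearZ /= fu1 mulr1 subrr.
by rewrite linearB linearZ /= => /eqP; rewrite subr_eq0 => /eqP.
Qed.

Variables (g : {scalar V}) (v : V).
Hypotheses (g_W : forall w, w \in W -> g w = 0) (gv1 : g v = 1).

Lemma right_inv_mul : f v * g u = 1.
Proof. by rewrite -scalar_factor_hyperplane. Qed.

Lemma scalar_at_right_inv (phi : {scalar V}) :
  (forall w, w \in W -> phi w = 0) -> phi v * g u = phi u.
Proof.
by move=> phi_W; rewrite (scalar_factor_hyperplane phi_W) mulrAC right_inv_mul mul1r.
Qed.

Lemma right_inv_scalar_neq0 : g u != 0.
Proof.
by apply: contra_eq_neq right_inv_mul => ->; rewrite mulr0 eq_sym oner_neq0.
Qed.

End Hyperplane.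

Theorem proposition4p6 (k : fieldType) (V : lmodType k) (r : nat)
  (cord : 'I_r -> 'I_r -> Type)
  (W : 'I_r -> {pred V}) (M Lam : 'I_r -> {linear V -> V})
  (A : forall s t : 'I_r, cord s t -> {linear V -> V})
  (HF : sheaf_data W M Lam A)
  (f g : 'I_r -> {scalar V})
  (Hf : local_triv W f) (Hg : local_triv W g)
  (finv ginv : 'I_r -> V)
  (Hfi : right_inv f finv) (Hgi : right_inv g ginv) :
  dilation_equiv
    (eps_cord M A f finv) (eps_cord M A g ginv)
    (eps_lambda Lam f finv) (eps_lambda Lam g ginv)
    (eps_mu M f finv) (eps_mu M g ginv).
Proof.
case: HF => _ W_codim1 M_W Lam_W _.
have f_W s : forall w, w \in W s -> f s w = 0 := (Hf s).2.
have g_W s : forall w, w \in W s -> g s w = 0 := (Hg s).2.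
pose c s := g s (finv s).
have g_fc s x : g s x = f s x * c s :=
  scalar_factor_hyperplane (W_codim1 s) (f_W s) (Hfi s) (g_W s) x.
have rescale s (phi : {scalar V}) : (forall w, w \in W s -> phi w = 0) ->
    phi (ginv s) * c s = phi (finv s) :=
  scalar_at_right_inv (phi := phi) (W_codim1 s) (f_W s) (Hfi s) (g_W s) (Hgi s).
have c_neq0 s : c s != 0 :=
  right_inv_scalar_neq0 (W_codim1 s) (f_W s) (Hfi s) (g_W s) (Hgi s).
have ImM_W s w : w \in W s -> (idfun \- M s) w = 0.
  by move=> wW /=; rewrite M_W // subrr.
exists c; split => [// | s | s | s t cc].
- rewrite /eps_lambda g_fc.
  by apply: (rescale s (f s \o Lam s)) => w wW /=; rewrite f_W ?Lam_W.
- rewrite /eps_mu g_fc.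
  congr (1 - _); apply: (rescale s (f s \o (idfun \- M s))).
  by move=> w /ImM_W /= ->; rewrite linear0.
- have phi_W w : w \in W t -> (g s \o A s t cc \o (idfun \- M t)) w = 0.
    by move=> /ImM_W /= ->; rewrite !linear0.
  move: (rescale t _ phi_W) => /= /(canRL (mulfK (c_neq0 t))).
  by rewrite /eps_cord => ->; rewrite g_fc [RHS]mulrC mulrA.
Qed.
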